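(* Let $(A,\cdot,\alpha_A)$ and $(B,\circ,\alpha_B)$ be nearly Hom-associative algebras over a field $\mathbb{K}$ of characteristic $0$ and let $(A,B,l_A,r_A,\alpha_B,l_B,r_B,\alpha_A)$ be a matched pair of them. Then $(\mathcal{G}(A),\mathcal{G}(B),l_A-r_A,l_B-r_B,\alpha_A,\alpha_B)$ is a matched pair of the underlying Hom-Lie algebras $\mathcal{G}(A)=(A,[\cdot,\cdot]_A,\alpha_A)$ and $\mathcal{G}(B)=(B,[\cdot,\cdot]_B,\alpha_B)$. Explicitly, writing $\mu=l_A-r_A:A\to\mathrm{End}(B)$ and $\rho=l_B-r_B:B\to\mathrm{End}(A)$: $\mu$ is a representation of $\mathcal{G}(A)$ on $B$ with respect to $\alpha_B$, $\rho$ is a representation of $\mathcal{G}(B)$ on $A$ with respect to $\alpha_A$, and for all $x,y\in A$, $a,b\in B$: \begin{align*} \mu(\alpha_A(x))[a,b]_B&=[\mu(x)a,\alpha_B(b)]_B+[\alpha_B(a),\mu(x)b]_B-\mu(\rho(a)x)(\alpha_B(b))+\mu(\rho(b)x)(\alpha_B(a)),\\ \rho(\alpha_B(a))[x,y]_A&=[\rho(a)x,\alpha_A(y)]_A+[\alpha_A(x),\rho(a)y]_A-\rho(\mu(x)a)(\alpha_A(y))+\rho(\mu(y)a)(\alpha_A(x)). \end{align*}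
   Context: A nearly Hom-associative algebra is a triple $(A,\cdot,\alpha)$ with bilinear product $\cdot$ and linear $\alpha$ such that $\alpha(x)\cdot(y\cdot z)=(z\cdot x)\cdot\alpha(y)$ for all $x,y,z$; its underlying Hom-Lie algebra is $\mathcal G(A)=(A,[\cdot,\cdot]_A,\alpha)$ with $[x,y]_A=x\cdot y-y\cdot x$. A bimodule of $(A,\cdot,\alpha)$ is $(l,r,V,\varphi)$ with $l,r:A\to\mathrm{End}(V)$ linear, $\varphi\in\mathrm{End}(V)$, such that for all $x,y$: $\varphi l(x)=l(\alpha(x))\varphi$, $\varphi r(x)=r(\alpha(x))\varphi$, $l(\alpha(x))l(y)=r(\alpha(y))r(x)$, $l(\alpha(x))r(y)=l(y\cdot x)\varphi$, $r(\alpha(x))l(y)=r(x\cdot y)\varphi$. A matched pair $(A,B,l_A,r_A,\alpha_B,l_B,r_B,\alpha_A)$ of nearly Hom-associative algebras $(A,\cdot,\alpha_A)$, $(B,\circ,\alpha_B)$ consists of linear maps $l_A,r_A:A\to\mathrm{End}(B)$, $l_B,r_B:B\to\mathrm{End}(A)$ such that $(l_A,r_A,B,\alpha_B)$ is a bimodule of $(A,\cdot,\alpha_A)$, $(l_B,r_B,A,\alpha_A)$ is a bimodule of $(B,\circ,\alpha_B)$, and for all $x,y\in A$, $a,b\in B$: $\alpha_A(x)\cdot(r_B(a)y)+r_B(l_A(y)a)\alpha_A(x)-(l_B(a)x)\cdot\alpha_A(y)-l_B(r_A(x)a)\alpha_A(y)=0$; $\alpha_A(x)\cdot(l_B(a)y)+r_B(r_A(y)a)\alpha_A(x)-r_B(\alpha_B(a))(y\cdot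 x)=0$; $l_B(\alpha_B(a))(x\cdot y)-(r_B(a)y)\cdot\alpha_A(x)-l_B(l_A(y)a)\alpha_A(x)=0$; $\alpha_B(a)\circ(r_A(x)b)+r_A(l_B(b)x)\alpha_B(a)-(l_A(x)a)\circ\alpha_B(b)-l_A(r_B(a)x)\alpha_B(b)=0$; $\alpha_B(a)\circ(l_A(x)b)+r_A(r_B(b)x)\alpha_B(a)-r_A(\alpha_A(x))(b\circ a)=0$; $l_A(\alpha_A(x))(b\circ a)-(r_A(x)a)\circ\alpha_B(b)-l_A(l_B(a)x)\alpha_B(b)=0$. A representation of a Hom-Lie algebra $(\mathcal G,[\cdot,\cdot],\alpha)$ on $V$ with respect to $\psi\in\mathrm{End}(V)$ is a linear $\rho:\mathcal G\to\mathrm{End}(V)$ with $\rho(\alpha(x))\psi=\psi\rho(x)$ and $\rho([x,y])\psi=\rho(\alpha(x))\rho(y)-\rho(\alpha(y))\rho(x)$. *)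

From mathcomp Require Import all_boot all_order all_algebra.
Set Implicit Arguments. Unset Strict Implicit. Unset Printing Implicit Defensive.
Import GRing.Theory.
Local Open Scope ring_scope.

Section Defs.
Variable K : fieldType.

Definition is_linear (U W : lmodType K) (f : U -> W) : Prop :=
  (forall u v, f (u + v) = f u + f v) /\ (forall (k : K) u, f (k *: u) = k *: f u).

Definition is_bilinear (U V W : lmodType K) (f : U -> V -> W) : Prop :=
  (forall u, is_linear (f u)) /\ (forall v, is_linear (fun u => f u v)).

(* a linear map l : U -> End(V), encoded as a bilinear U -> V -> V *)
Definition is_lin_to_End (U V : lmodType K) (l : U -> V -> V) : Prop :=
  is_bilinear l.

Definition nearly_hom_assoc (A : lmodType K) (mul : A -> A -> A) (alpha : A -> A) : Prop :=
  [/\ is_bilinear mul, is_linear alpha &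
   forall x y z, mul (alpha x) (mul y z) = mul (mul z x) (alpha y)].

Definition commutator (A : lmodType K) (mul : A -> A -> A) (x y : A) : A :=
  mul x y - mul y x.

Definition nha_bimodule (A V : lmodType K) (mul : A -> A -> A) (alpha : A -> A)
    (l r : A -> V -> V) (phi : V -> V) : Prop :=
  is_lin_to_End l /\ is_lin_to_End r /\ is_linear phi /\
  (forall x v, phi (l x v) = l (alpha x) (phi v)) /\
  (forall x v, phi (r x v) = r (alpha x) (phi v)) /\
  (forall x y v, l (alpha x) (l y v) = r (alpha y) (r x v)) /\
  (forall x y v, l (alpha x) (r y v) = l (mul y x) (phi v)) /\
  (forall x y v, r (alpha x) (l y v) = r (mul x y) (phi v)).

Definition nha_matched_pair (A B : lmodType K)
    (mulA : A -> A -> A) (alphaA : A -> A) (mulB : B -> B -> B) (alphaB : B -> B)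
    (lA rA : A -> B -> B) (lB rB : B -> A -> A) : Prop :=
  nha_bimodule mulA alphaA lA rA alphaB /\
      nha_bimodule mulB alphaB lB rB alphaA /\
      (forall (x y : A) (a : B),
         mulA (alphaA x) (rB a y) + rB (lA y a) (alphaA x)
         - mulA (lB a x) (alphaA y) - lB (rA x a) (alphaA y) = 0) /\
      (forall (x y : A) (a : B),
         mulA (alphaA x) (lB a y) + rB (rA y a) (alphaA x)
         - rB (alphaB a) (mulA y x) = 0) /\
      (forall (x y : A) (a : B),
         lB (alphaB a) (mulA x y) - mulA (rB a y) (alphaA x)
         - lB (lA y a) (alphaA x) = 0) /\
      (forall (x : A) (a b : B),
         mulB (alphaB a) (rA x b) + rA (lB b x) (alphaB a)
         - mulB (lA x a) (alphaB b) - lA (rB a x) (alphaB b) = 0) /\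
      (forall (x : A) (a b : B),
         mulB (alphaB a) (lA x b) + rA (rB b x) (alphaB a)
         - rA (alphaA x) (mulB b a) = 0) /\
      (forall (x : A) (a b : B),
         lA (alphaA x) (mulB b a) - mulB (rA x a) (alphaB b)
         - lA (lB a x) (alphaB b) = 0).

Definition homlie_rep (G V : lmodType K) (br : G -> G -> G) (alpha : G -> G)
    (rho : G -> V -> V) (psi : V -> V) : Prop :=
  [/\ is_lin_to_End rho,
      (forall x v, rho (alpha x) (psi v) = psi (rho x v)) &
      (forall x y v, rho (br x y) (psi v) = rho (alpha x) (rho y v) - rho (alpha y) (rho x v))].

End Defs.

(* For mu = l - r, the axioms l(alpha x) l(y) = r(alpha y) r(x) make the
   quadratic terms of mu(alpha x) mu(y) - mu(alpha y) mu(x) cancel, and the two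
   mixed bimodule axioms turn the remaining terms into mu([x, y]) phi.  The
   compatibility identity for mu is the difference of the last three
   matched-pair axioms taken at (a, b) and at (b, a); the one for rho is the
   same identity for the matched pair with the roles of A and B exchanged, a
   notion that is symmetric. *)

From mathcomp Require Import all_boot all_order all_algebra.
Import GRing.Theory.
Set Implicit Arguments.
Unset Strict Implicit.
Unset Printing Implicit Defensive.
Local Open Scope ring_scope.

(* Closes an identity between two signed sums in a zmodType that agree up to
   reordering and cancellation of opposite summands. *)
Ltac zmod_cancel :=
  apply/eqP; rewrite -subr_eq0; apply/eqP; rewrite -[LHS]add0r ?(opprD, opprK, addrA);
  repeat match goal with |- context [- ?a] =>
    rewrite ?[_ + - a + _]addrAC ?[_ + a + _]addrAC subrK end;
  by rewrite ?addr0.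

Section Linearity.
Variable K : fieldType.
Implicit Types U V W : lmodType K.

Lemma is_linear_addE U W (f : U -> W) :
  is_linear f -> {morph f : u v / u + v} * {morph f : u / - u}.
Proof. by case=> fD fZ; split=> // u; rewrite -scaleN1r fZ scaleN1r. Qed.

Lemma is_linearB U W (f g : U -> W) :
  is_linear f -> is_linear g -> is_linear (fun u => f u - g u).
Proof.
move=> lf lg; split=> [u v|k u].
  by rewrite !(is_linear_addE lf, is_linear_addE lg); zmod_cancel.
by rewrite (proj2 lf) (proj2 lg) scalerBr.
Qed.

Lemma is_bilinear_addE U V W (f : U -> V -> W) : is_bilinear f ->
  (forall u1 u2 v, f (u1 + u2) v = f u1 v + f u2 v) * (forall u v, f (- u) v = - f u v)
  * (forall u v1 v2, f u (v1 + v2) = f u v1 + f u v2) * (forall u v, f u (- v) = - f u v).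
Proof.
case=> fr fl; do 3?split.
- by move=> u1 u2 v; rewrite (is_linear_addE (fl v)).1.
- by move=> u v; rewrite (is_linear_addE (fl v)).2.
- by move=> u v1 v2; rewrite (is_linear_addE (fr u)).1.
- by move=> u v; rewrite (is_linear_addE (fr u)).2.
Qed.

Lemma is_bilinearB U V W (f g : U -> V -> W) :
  is_bilinear f -> is_bilinear g -> is_bilinear (fun u v => f u v - g u v).
Proof. by case=> fr fl [gr gl]; split=> [u|v]; apply: is_linearB. Qed.

End Linearity.

Section BimoduleRepresentation.
Variables (K : fieldType) (A V : lmodType K).
Variables (mul : A -> A -> A) (alpha : A -> A) (l r : A -> V -> V) (phi : V -> V).
Hypothesis bimod : nha_bimodule mul alpha l r phi.

Lemma nha_bimodule_homlie_rep :
  homlie_rep (commutator mul) alpha (fun x v => l x v - r x v) phi.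
Proof.
have [lbil [rbil [philin [phil [phir [ll [lr rl]]]]]]] := bimod.
split=> [|x v|x y v]; first exact: is_bilinearB.
  by rewrite !(is_linear_addE philin) phil phir.
rewrite /commutator !(is_bilinear_addE lbil, is_bilinear_addE rbil).
by rewrite !ll !lr !rl; zmod_cancel.
Qed.

End BimoduleRepresentation.

Section MatchedPair.
Variables (K : fieldType) (A B : lmodType K).
Variables (mulA : A -> A -> A) (alphaA : A -> A) (mulB : B -> B -> B) (alphaB : B -> B).
Variables (lA rA : A -> B -> B) (lB rB : B -> A -> A).

Lemma nha_matched_pair_sym :
  nha_matched_pair mulA alphaA mulB alphaB lA rA lB rB ->
  nha_matched_pair mulB alphaB mulA alphaA lB rB lA rA.
Proof.
by case=> bimA [bimB [M1 [M2 [M3 [M4 [M5 M6]]]]]]; do !split=> // *;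
  rewrite ?(M1, M2, M3, M4, M5, M6).
Qed.

Local Notation mu := (fun x a => lA x a - rA x a).
Local Notation rho := (fun a x => lB a x - rB a x).

Lemma nha_matched_pair_compat :
  is_bilinear mulB -> nha_matched_pair mulA alphaA mulB alphaB lA rA lB rB ->
  forall x a b,
    mu (alphaA x) (commutator mulB a b)
    = commutator mulB (mu x a) (alphaB b) + commutator mulB (alphaB a) (mu x b)
      - mu (rho a x) (alphaB b) + mu (rho b x) (alphaB a).
Proof.
move=> mulBbil [[lAbil [rAbil _]] [_ [_ [_ [_ [M4 [M5 M6]]]]]]] x.
have mulB_rA a b : mulB (alphaB a) (rA x b)
    = mulB (lA x a) (alphaB b) + lA (rB a x) (alphaB b) - rA (lB b x) (alphaB a).
  by apply: subr0_eq; rewrite -(M4 x a b); zmod_cancel.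
have rA_mulB a b : rA (alphaA x) (mulB b a)
    = mulB (alphaB a) (lA x b) + rA (rB b x) (alphaB a).
  exact: esym (subr0_eq (M5 x a b)).
have lA_mulB a b : lA (alphaA x) (mulB b a)
    = mulB (rA x a) (alphaB b) + lA (lB a x) (alphaB b).
  by apply: subr0_eq; rewrite -(M6 x a b); zmod_cancel.
move=> a b; rewrite /commutator.
rewrite !(is_bilinear_addE mulBbil, is_bilinear_addE lAbil, is_bilinear_addE rAbil).
by rewrite !mulB_rA !rA_mulB !lA_mulB; zmod_cancel.
Qed.

End MatchedPair.

Theorem mainTheorem14 (K : fieldType) (char0 : [pchar K] =i pred0)
    (A B : lmodType K)
    (mulA : A -> A -> A) (alphaA : A -> A) (mulB : B -> B -> B) (alphaB : B -> B)
    (lA rA : A -> B -> B) (lB rB : B -> A -> A) :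
  nearly_hom_assoc mulA alphaA ->
  nearly_hom_assoc mulB alphaB ->
  nha_matched_pair mulA alphaA mulB alphaB lA rA lB rB ->
  let mu := fun (x : A) (a : B) => lA x a - rA x a in
  let rho := fun (a : B) (x : A) => lB a x - rB a x in
  [/\ homlie_rep (commutator mulA) alphaA mu alphaB,
      homlie_rep (commutator mulB) alphaB rho alphaA,
      (forall (x : A) (a b : B),
         mu (alphaA x) (commutator mulB a b)
         = commutator mulB (mu x a) (alphaB b) + commutator mulB (alphaB a) (mu x b)
           - mu (rho a x) (alphaB b) + mu (rho b x) (alphaB a)) &
      (forall (x y : A) (a : B),
         rho (alphaB a) (commutator mulA x y)
         = commutator mulA (rho a x) (alphaA y) + commutator mulA (alphaA x) (rho a y)
           - rho (mu x a) (alphaA y) + rho (mu y a) (alphaA x))].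
Proof.
move=> [mulAbil _ _] [mulBbil _ _] mp mu rho.
have [bimA [bimB _]] := mp.
split.
- exact: nha_bimodule_homlie_rep bimA.
- exact: nha_bimodule_homlie_rep bimB.
- exact: nha_matched_pair_compat mulBbil mp.
- by move=> x y a; apply: nha_matched_pair_compat mulAbil (nha_matched_pair_sym mp) a x y.
Qed.
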